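(* For $n\ge2$, with $\widetilde Q_n$, $\Sigma^2$, $\iota$, $f_n$, $f_{n+1}$ and $\epsilon_n$ as in the context, $$\iota_*\circ\Sigma^2\,[f_n\circ\epsilon_n]\;=\;[f_{n+1}\circ\epsilon_{n+1}]\quad\text{in }\pi_{2n+1}(\widetilde Q_{n+1}),$$ where $\epsilon_{n+1}:=\Sigma^2\epsilon_n$.
   Context: $\widetilde Q_n=\{(a,b)\in\mathbb R^{2n}\oplus\mathbb R^{2n}: |a|=|b|=1,\ \langle a,b\rangle=0\}$. For $S\subset V$, $\Sigma^2S=\{(\sqrt{1-|X|^2}\,v,X): v\in S, X\in\mathbb R^2,|X|\le1\}\subset V\oplus\mathbb R^2$, and for $f\colon P\to S$ with $P\subset U$, $\Sigma^2f(\sqrt{1-|X|^2}u,X)=(\sqrt{1-|X|^2}f(u),X)$. $j_+$ is the orientation-compatible orthogonal complex structure on $\mathbb R^2$, and $\iota\colon\Sigma^2\widetilde Q_n\to\widetilde Q_{n+1}$ is $(\sqrt{1-|X|^2}(a,b),X)\mapsto\big((\sqrt{1-|X|^2}a,X),(\sqrt{1-|X|^2}b,-j_+X)\big)$. Fix a unit vector $a\in\mathbb R^{2n}$; $f_n\colon S(a^\perp)\cong S^{2n-2}\to\widetilde Q_n$, $b\mapsto(a,b)$, is the inclusion of a fibre of $(a,b)\mapsto a$, and $f_{n+1}\colon S((a,0)^\perp)\to\widetilde Q_{n+1}$, $c\mapsto((a,0),c)$, where $S((a,0)^\perp)=S(a^\perp\oplus\mathbb R^2)=\Sigma^2S(a^\perp)$.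 $\epsilon_n$ is a generator of $\pi_{2n-1}(S(a^\perp))\cong\pi_{2n-1}(S^{2n-2})$ ($\cong\mathbb Z$ for $n=2$, $\mathbb Z/2$ for $n>2$), and $\epsilon_{n+1}=\Sigma^2\epsilon_n\in\pi_{2n+1}(S((a,0)^\perp))$. *)

From HB Require Import structures.
From mathcomp Require Import all_boot all_order all_algebra.
From mathcomp Require Import all_classical all_reals all_analysis.
Set Implicit Arguments. Unset Strict Implicit. Unset Printing Implicit Defensive.
Import Order.TTheory GRing.Theory Num.Theory numFieldNormedType.Exports.
Local Open Scope classical_set_scope.
Local Open Scope ring_scope.

Definition dotv (R : realType) (d : nat) (u v : 'rV[R]_d) : R :=
  \sum_(i < d) u 0 i * v 0 i.
Definition sqnorm (R : realType) (d : nat) (u : 'rV[R]_d) : R := dotv u u.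

Definition sphere (R : realType) (d : nat) : set 'rV[R]_d :=
  [set u | sqnorm u = 1].

Definition perp_sphere (R : realType) (d : nat) (a : 'rV[R]_d) : set 'rV[R]_d :=
  [set b | sqnorm b = 1 /\ dotv a b = 0].

(* \widetilde Q over R^d ⊕ R^d (the paper's \widetilde Q_n is Qt (2*n)) *)
Definition Qt (R : realType) (d : nat) : set ('rV[R]_d * 'rV[R]_d) :=
  [set p | sqnorm p.1 = 1 /\ sqnorm p.2 = 1 /\ dotv p.1 p.2 = 0].

Definition sfac (R : realType) (X : 'rV[R]_2) : R := Num.sqrt (1 - sqnorm X).

Definition Sigma2 (R : realType) (V : lmodType R) (S : set V) : set (V * 'rV[R]_2) :=
  [set y | exists v X, S v /\ sqnorm X <= 1 /\ y = (sfac X *: v, X)].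

(* Sigma^2 f : (sqrt(1-|X|^2) u, X) |-> (sqrt(1-|X|^2) f(u), X).
   On a point (w, X) of Sigma^2 P with sqrt(1-|X|^2) <> 0 one has u = w / s;
   when s = 0 the value is (0, X) whatever u is (and s^-1 = 0 by convention). *)
Definition Sigma2f (R : realType) (U V : lmodType R) (f : U -> V)
  (y : U * 'rV[R]_2) : V * 'rV[R]_2 :=
  (sfac y.2 *: f ((sfac y.2)^-1 *: y.1), y.2).

Definition jplus (R : realType) (X : 'rV[R]_2) : 'rV[R]_2 :=
  \row_(i < 2) (if i == ord0 then - X 0 ord_max else X 0 ord0).

Definition iotaQ (R : realType) (d : nat) (y : ('rV[R]_d * 'rV[R]_d) * 'rV[R]_2)
  : 'rV[R]_(d + 2) * 'rV[R]_(d + 2) :=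
  (row_mx y.1.1 y.2, row_mx y.1.2 (- jplus y.2)).

Definition fib_incl (R : realType) (d : nat) (a : 'rV[R]_d) (b : 'rV[R]_d)
  : 'rV[R]_d * 'rV[R]_d := (a, b).

Definition vsum (R : realType) (d : nat) (y : 'rV[R]_d * 'rV[R]_2) : 'rV[R]_(d + 2) :=
  row_mx y.1 y.2.

Definition based_homotopic (R : realType) (T U : topologicalType)
  (D : set T) (Y : set U) (x0 : T) (g h : T -> U) : Prop :=
  exists H : R * T -> U,
    {within `[0, 1]%classic `*` D, continuous H} /\
    (forall t x, `[0, 1]%classic t -> D x -> Y (H (t, x))) /\
    (forall x, D x -> H (0, x) = g x) /\
    (forall x, D x -> H (1, x) = h x) /\
    (forall t, `[0, 1]%classic t -> H (t, x0) = g x0).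

Arguments sphere R d : clear implicits.
Arguments Qt R d : clear implicits.
Arguments based_homotopic R {T U} D Y x0 g h.

(* The homotopy H_t((s w, X)) = (P_t, Q_t) with s = sqrt(1 - |X|^2), lambda = 1 - t,
   alpha = sqrt(1 - lambda^2 |X|^2), E = s eps(w) and (c, m) moving along a
   quarter of the unit circle from (1, 0) to (0, 1):
     P_t = (alpha a, lambda X),
     Q_t = (E - lambda m |X|^2 a, - c j_+ X + m alpha X).
   P_t is a unit vector, and since |E|^2 = 1 - |X|^2, a is orthogonal to E and
   X to j_+ X, Q_t is a unit vector orthogonal to P_t; the correction term
   - lambda m |X|^2 a is exactly what cancels <P_t, Q_t>.  At t = 0 this is
   iota o Sigma^2 (f_n o eps_n), at t = 1 it is f_(n+1) o Sigma^2 eps_n, and it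
   does not move points with X = 0.  Continuity at the poles s = 0 of the
   suspension follows from |E| <= s. *)

From HB Require Import structures.
From mathcomp Require Import all_boot all_order all_algebra.
From mathcomp Require Import all_classical all_reals all_analysis.
From mathcomp Require Import ring.
Import Order.TTheory GRing.Theory Num.Theory numFieldNormedType.Exports.
Local Open Scope classical_set_scope.
Local Open Scope ring_scope.

Section dotv_theory.
Context {R : realType}.
Implicit Types (d : nat) (k : R).

Lemma dotvC {d} (u v : 'rV[R]_d) : dotv u v = dotv v u.
Proof. by apply: eq_bigr => i _; rewrite mulrC. Qed.

Lemma dotvDl {d} (u v w : 'rV[R]_d) : dotv (u + v) w = dotv u w + dotv v w.
Proof. by rewrite /dotv -big_split; apply: eq_bigr => i _; rewrite mxE mulrDl. Qed.

Lemma dotvZl {d} k (u w : 'rV[R]_d) : dotv (k *: u) w = k * dotv u w.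
Proof. by rewrite /dotv mulr_sumr; apply: eq_bigr => i _; rewrite mxE mulrA. Qed.

Lemma dotvNl {d} (u w : 'rV[R]_d) : dotv (- u) w = - dotv u w.
Proof. by rewrite -scaleN1r dotvZl mulN1r. Qed.

Lemma dotvDr {d} (u v w : 'rV[R]_d) : dotv w (u + v) = dotv w u + dotv w v.
Proof. by rewrite dotvC dotvDl !(dotvC w). Qed.

Lemma dotvZr {d} k (u w : 'rV[R]_d) : dotv w (k *: u) = k * dotv w u.
Proof. by rewrite dotvC dotvZl dotvC. Qed.

Lemma dotvNr {d} (u w : 'rV[R]_d) : dotv w (- u) = - dotv w u.
Proof. by rewrite dotvC dotvNl dotvC. Qed.

Lemma dotv0r {d} (w : 'rV[R]_d) : dotv w 0 = 0.
Proof. by rewrite -(scale0r (0 : 'rV[R]_d)) dotvZr mul0r. Qed.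

Lemma dotv_row_mx {d1 d2} (u1 v1 : 'rV[R]_d1) (u2 v2 : 'rV[R]_d2) :
  dotv (row_mx u1 u2) (row_mx v1 v2) = dotv u1 v1 + dotv u2 v2.
Proof.
by rewrite /dotv big_split_ord; congr (_ + _); apply: eq_bigr => i _;
  rewrite ?row_mxEl ?row_mxEr.
Qed.

Lemma sqnorm_ge0 {d} (u : 'rV[R]_d) : 0 <= sqnorm u.
Proof. by apply: sumr_ge0 => i _; rewrite -expr2 sqr_ge0. Qed.

Lemma sqnorm0 {d} : sqnorm (0 : 'rV[R]_d) = 0.
Proof. exact: dotv0r. Qed.

Lemma sqnormZ {d} k (u : 'rV[R]_d) : sqnorm (k *: u) = k ^+ 2 * sqnorm u.
Proof. by rewrite /sqnorm dotvZl dotvZr mulrA expr2. Qed.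

Lemma sqnormN {d} (u : 'rV[R]_d) : sqnorm (- u) = sqnorm u.
Proof. by rewrite /sqnorm dotvNl dotvNr opprK. Qed.

Lemma sphere_norm {d} (v : 'rV[R]_d) : sphere R d v -> `|v| <= 1.
Proof.
move=> sv; rewrite [leLHS]/Num.Def.normr/= mx_normrE.
apply: bigmax_le => // -[i j] _ /=; rewrite ord1.
have : `|v 0 j| ^+ 2 <= 1.
  rewrite real_normK ?num_real // -sv /sqnorm /dotv (bigD1 j) //= -expr2 lerDl.
  by apply: sumr_ge0 => l _; rewrite -expr2 sqr_ge0.
by rewrite -[leRHS](expr1n _ 2) ler_pXn2r // ?nnegrE.
Qed.

Lemma dotv_jplus (X : 'rV[R]_2) : dotv X (jplus X) = 0.
Proof.
rewrite /dotv !big_ord_recl big_ord0 !mxE /=.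
by rewrite (_ : lift ord0 ord0 = ord_max); [ring | apply/val_inj].
Qed.

Lemma sqnorm_jplus (X : 'rV[R]_2) : sqnorm (jplus X) = sqnorm X.
Proof.
rewrite /sqnorm /dotv !big_ord_recl !big_ord0 !mxE /=.
by rewrite (_ : lift ord0 ord0 = ord_max); [ring | apply/val_inj].
Qed.

Lemma jplus0 : jplus (0 : 'rV[R]_2) = 0.
Proof. by apply/rowP => i; rewrite !mxE; case: ifP; rewrite ?oppr0. Qed.

End dotv_theory.

Section matrix_limits.
Context {R : realType} {T : Type} {F : set_system T} {FF : Filter F}.

Lemma cvg_mxP m k (f : T -> 'M[R]_(m, k)) (M : 'M[R]_(m, k)) :
  f @ F --> M <-> forall i j, (fun x => f x i j) @ F --> M i j.
Proof.
split=> [fM i j|fM A [P MP PA]].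
  exact: (continuous_cvg _ (@coord_continuous _ _ _ i j M) fM).
have : \forall x \near F, forall i j, P i j (f x i j).
  by do 2![apply: filter_forall => ?]; exact: fM.
by apply: filterS => x; apply: PA.
Qed.

Lemma cvg_row_mx m k1 k2 (f : T -> 'M[R]_(m, k1)) (g : T -> 'M[R]_(m, k2))
    (u : 'M[R]_(m, k1)) (v : 'M[R]_(m, k2)) :
  f @ F --> u -> g @ F --> v -> (fun x => row_mx (f x) (g x)) @ F --> row_mx u v.
Proof.
move=> /cvg_mxP fu /cvg_mxP gv; apply/cvg_mxP => i j; rewrite mxE.
under eq_cvg do rewrite mxE.
by case: splitP => l _; [apply: fu | apply: gv].
Qed.

Lemma cvg_dotv d (f g : T -> 'rV[R]_d) (u v : 'rV[R]_d) :
  f @ F --> u -> g @ F --> v -> (fun x => dotv (f x) (g x)) @ F --> dotv u v.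
Proof.
move=> /cvg_mxP fu /cvg_mxP gv.
apply: (@cvg_big _ _ _ _ _ _ _ _ _ (fun i x => f x 0 i * g x 0 i)) => [|i _].
  exact: add_continuous.
exact: cvgM.
Qed.

Lemma cvg_jplus (f : T -> 'rV[R]_2) (X : 'rV[R]_2) :
  f @ F --> X -> (fun x => jplus (f x)) @ F --> jplus X.
Proof.
move=> /cvg_mxP fX; apply/cvg_mxP => i j; rewrite mxE.
under eq_cvg do rewrite mxE.
by case: ifP => _; [apply: cvgN; apply: fX | apply: fX].
Qed.

Lemma cvg_sfac (f : T -> 'rV[R]_2) (X : 'rV[R]_2) :
  f @ F --> X -> (fun x => sfac (f x)) @ F --> sfac X.
Proof.
move=> fX; apply: (continuous_cvg _ (@sqrt_continuous R _)).
by apply: cvgB; [exact: cvg_cst | exact: cvg_dotv].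
Qed.

End matrix_limits.

Lemma cvg_to_within {T : Type} {U : topologicalType} {F : set_system T} {FF : Filter F}
    {f : T -> U} {A : set U} {x : U} :
  f @ F --> x -> (\forall y \near F, A (f y)) -> f @ F --> within A (nbhs x).
Proof. by move=> fx FA P /fx; apply: filterS2 FA => y Ay; apply. Qed.

Section suspension.
Context {R : realType} {U V : lmodType R}.
Implicit Types (S : set U) (f : U -> V).

Lemma Sigma2fE f (v : U) (X : 'rV[R]_2) :
  Sigma2f f (sfac X *: v, X) = (sfac X *: f v, X).
Proof.
rewrite /Sigma2f /=; have [->|s0] := eqVneq (sfac X) 0; first by rewrite !scale0r.
by rewrite scalerK.
Qed.

Lemma Sigma2_Sigma2f {S} {T : set V} {f} {y} : (forall u, S u -> T (f u)) ->
  Sigma2 S y -> Sigma2 T (Sigma2f f y).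
Proof. by move=> fST [v [X [Sv [X1 ->]]]]; rewrite Sigma2fE; exists (f v), X; auto. Qed.

Lemma Sigma2_unscale S y : Sigma2 S y -> sfac y.2 != 0 -> S ((sfac y.2)^-1 *: y.1).
Proof. by move=> [v [X [Sv [_ ->]]]] /= s0; rewrite scalerK. Qed.

End suspension.

Lemma Sigma2_perp_sphereP {R : realType} {d} {a : 'rV[R]_d} {z} :
  Sigma2 (perp_sphere a) z ->
  [/\ sqnorm z.1 = 1 - sqnorm z.2, dotv a z.1 = 0 & sqnorm z.2 <= 1].
Proof.
case=> w [X [[w1 aw] [X1 ->]]] /=; split=> //; last by rewrite dotvZr aw mulr0.
by rewrite sqnormZ w1 mulr1 /sfac sqr_sqrtr ?subr_ge0.
Qed.

Section suspension_continuity.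
Context {R : realType} {U V : normedModType R} {S : set U} {f : U -> V}.
Hypotheses (f_cont : {within S, continuous f}) (f_le1 : forall u, S u -> `|f u| <= 1).

Lemma Sigma2f_fst_le y : Sigma2 S y -> `|(Sigma2f f y).1| <= sfac y.2.
Proof.
move=> [v [X [Sv [_ ->]]]]; rewrite Sigma2fE /= normrZ ger0_norm ?sqrtr_ge0 //.
by rewrite ler_piMr ?sqrtr_ge0 ?f_le1.
Qed.

Lemma Sigma2f_continuous : {within Sigma2 S, continuous (Sigma2f f)}.
Proof.
apply/subspace_continuousP => y Sy; set G := within (Sigma2 S) (nbhs y).
have GS : \forall y' \near G, Sigma2 S y' by exact: withinT.
have y2 : snd @ G --> y.2 by apply: cvg_within_filter; exact: cvg_snd.
have s2 : (fun y' => sfac y'.2) @ G --> sfac y.2 by exact: cvg_sfac.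
apply: (@cvg_pair _ _ _ G (nbhs (Sigma2f f y).1) (nbhs y.2) _ _ _
  (fun y' => (Sigma2f f y').1) snd) => //.
have [s0|s0] := eqVneq (sfac y.2) 0.
  rewrite {2}/Sigma2f s0 scale0r; apply/cvgr0Pnorm_lt => e e0.
  move: s2; rewrite s0 => /cvgr0Pnorm_lt /(_ e e0).
  apply: filterS2 GS => y' Sy' /(le_lt_trans (ler_norm _)).
  exact/le_lt_trans/Sigma2f_fst_le.
pose u (y' : U * 'rV[R]_2) : U := (sfac y'.2)^-1 *: y'.1.
have u_cvg : u @ G --> u y.
  by apply: cvgZ; [apply: cvgV | apply: cvg_within_filter; exact: cvg_fst].
have uS : \forall y' \near G, S (u y').
  by apply: filterS2 GS (cvgr_neq0 _ s2 s0); exact: Sigma2_unscale.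
have fu : (f \o u) @ G --> f (u y).
  apply: (cvg_comp u f (cvg_to_within u_cvg uS)).
  by move/subspace_continuousP: f_cont; apply; exact: Sigma2_unscale.
exact: cvgZ s2 fu.
Qed.

End suspension_continuity.

Section rational_circle.
Context {R : realType}.

(* The rational parametrisation of the unit circle; [t] in [0, 1] sweeps a
   quarter turn from (1, 0) to (0, 1). *)
Definition rcos (t : R) := (1 - t ^+ 2) / (1 + t ^+ 2).
Definition rsin (t : R) := 2 * t / (1 + t ^+ 2).

Lemma add1_sqr_neq0 (t : R) : 1 + t ^+ 2 != 0.
Proof. by rewrite gt_eqF // ltr_pwDl // sqr_ge0. Qed.

Lemma rcos2_rsin2 t : rcos t ^+ 2 + rsin t ^+ 2 = 1.
Proof. by have := add1_sqr_neq0 t; rewrite /rcos /rsin => ?; field. Qed.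

Lemma rcos0 : rcos 0 = 1. Proof. by rewrite /rcos expr0n /= subr0 addr0 divr1. Qed.
Lemma rsin0 : rsin 0 = 0. Proof. by rewrite /rsin mulr0 mul0r. Qed.
Lemma rcos1 : rcos 1 = 0. Proof. by rewrite /rcos expr1n subrr mul0r. Qed.
Lemma rsin1 : rsin 1 = 1. Proof. by rewrite /rsin expr1n mulr1 divff. Qed.

Lemma rcos_continuous : continuous rcos.
Proof.
move=> t; apply: cvgM; first by apply: cvgB; [exact: cvg_cst | exact: exprn_continuous].
by apply: cvgV; [exact: add1_sqr_neq0 | apply: cvgD; [exact: cvg_cst | exact: exprn_continuous]].
Qed.

Lemma rsin_continuous : continuous rsin.
Proof.
move=> t; apply: cvgM; first by apply: cvgM; [exact: cvg_cst | exact: cvg_id].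
by apply: cvgV; [exact: add1_sqr_neq0 | apply: cvgD; [exact: cvg_cst | exact: exprn_continuous]].
Qed.

End rational_circle.

Lemma Qt_row_mx (R : realType) d (a E : 'rV[R]_d) (X J : 'rV[R]_2) (al lam c s : R) :
  sqnorm a = 1 -> sqnorm E = 1 - sqnorm X -> dotv a E = 0 ->
  dotv X J = 0 -> sqnorm J = sqnorm X ->
  al ^+ 2 = 1 - lam ^+ 2 * sqnorm X -> c ^+ 2 + s ^+ 2 = 1 ->
  Qt R (d + 2) (row_mx (al *: a) (lam *: X),
                row_mx (- (lam * s * sqnorm X) *: a + E) (c *: J + (s * al) *: X)).
Proof.
rewrite /sqnorm => a1 E1 aE XJ J1 al2 cs1.
have Ea : dotv E a = 0 by rewrite dotvC.
have JX : dotv J X = 0 by rewrite dotvC.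
rewrite /Qt /sqnorm /= !dotv_row_mx !(dotvDl, dotvDr, dotvZl, dotvZr, dotvNl, dotvNr).
have c2 : c ^+ 2 = 1 - s ^+ 2 by rewrite -cs1 addrK.
by rewrite a1 E1 aE Ea XJ JX J1; split; [ring: al2 | split; [ring: al2 c2 | ring]].
Qed.

Section fibre_homotopy.
Context {R : realType} {d : nat}.
Variables (a : 'rV[R]_d) (eps : 'rV[R]_d -> 'rV[R]_d).

Definition fibre_homotopy (z : R * ('rV[R]_d * 'rV[R]_2)) :
    'rV[R]_(d + 2) * 'rV[R]_(d + 2) :=
  let t := z.1 in let X := z.2.2 in let lam := 1 - t in
  let al := Num.sqrt (1 - lam ^+ 2 * sqnorm X) in
  (row_mx (al *: a) (lam *: X),
   row_mx (- (lam * rsin t * sqnorm X) *: a + (Sigma2f eps z.2).1)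
          (rcos t *: - jplus X + (rsin t * al) *: X)).

Lemma fibre_homotopy0 y :
  fibre_homotopy (0, y) = iotaQ (Sigma2f (fun u => fib_incl a (eps u)) y).
Proof.
rewrite /fibre_homotopy /iotaQ /Sigma2f /= rcos0 rsin0 subr0 expr1n mul1r.
by rewrite !scale1r mulr0 mul0r oppr0 scale0r add0r mul0r scale0r addr0.
Qed.

Lemma fibre_homotopy1 y :
  fibre_homotopy (1, y) = fib_incl (vsum (a, 0)) (vsum (Sigma2f eps y)).
Proof.
rewrite /fibre_homotopy /vsum /fib_incl /= rcos1 rsin1 subrr expr0n mul0r.
by rewrite subr0 sqrtr1 !scale1r !mul0r oppr0 !scale0r !add0r mul1r scale1r.
Qed.

Lemma fibre_homotopy_axis t u : fibre_homotopy (t, (u, 0)) = fibre_homotopy (0, (u, 0)).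
Proof.
by rewrite /fibre_homotopy /= jplus0 sqnorm0 !mulr0 !subr0 !oppr0 !scaler0.
Qed.

Hypotheses (a1 : sqnorm a = 1)
  (eps_perp : forall u, sphere R d u -> perp_sphere a (eps u))
  (eps_cont : {within sphere R d, continuous eps}).

Lemma fibre_homotopy_Qt t y : 0 <= t <= 1 -> Sigma2 (sphere R d) y ->
  Qt R (d + 2) (fibre_homotopy (t, y)).
Proof.
move=> /andP[t0 t1] Sy.
have /= [E1 aE X1] := Sigma2_perp_sphereP (Sigma2_Sigma2f eps_perp Sy).
apply: Qt_row_mx => //.
- by rewrite dotvNr dotv_jplus oppr0.
- by rewrite sqnormN sqnorm_jplus.
- rewrite sqr_sqrtr // subr_ge0 -[leRHS](mulr1 1).
  by rewrite ler_pM ?sqr_ge0 ?sqnorm_ge0 // expr_le1 ?subr_ge0 // lerBlDr lerDl.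
- exact: rcos2_rsin2.
Qed.

Lemma fibre_homotopy_continuous :
  {within `[0, 1] `*` Sigma2 (sphere R d), continuous fibre_homotopy}.
Proof.
apply/subspace_continuousP => z [_ Sz]; set G := within _ (nbhs z).
have GD : \forall z' \near G, (`[0, 1] `*` Sigma2 (sphere R d)) z'.
  exact: withinT.
have t_cvg : fst @ G --> z.1 by apply: cvg_within_filter; exact: cvg_fst.
have y_cvg : snd @ G --> z.2 by apply: cvg_within_filter; exact: cvg_snd.
have X_cvg : (fun z' => z'.2.2) @ G --> z.2.2.
  by apply: (cvg_comp _ _ y_cvg); exact: cvg_snd.
have E_cvg : (fun z' => (Sigma2f eps z'.2).1) @ G --> (Sigma2f eps z.2).1.
  have yS : snd @ G --> within (Sigma2 (sphere R d)) (nbhs z.2).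
    by apply: (cvg_to_within y_cvg); apply: filterS GD => z' [].
  have eps_le1 u : sphere R d u -> `|eps u| <= 1.
    by move=> /eps_perp[eps1 _]; exact: sphere_norm.
  have /subspace_continuousP := Sigma2f_continuous eps_cont eps_le1.
  move=> /(_ _ Sz) /(cvg_comp _ _ yS) E2_cvg.
  by apply: (cvg_comp _ _ E2_cvg); exact: cvg_fst.
have lam_cvg : (fun z' => 1 - z'.1) @ G --> 1 - z.1.
  by apply: cvgB => //; exact: cvg_cst.
have al_cvg : (fun z' => Num.sqrt (1 - (1 - z'.1) ^+ 2 * sqnorm z'.2.2)) @ G -->
              Num.sqrt (1 - (1 - z.1) ^+ 2 * sqnorm z.2.2).
  apply: (continuous_cvg _ (@sqrt_continuous R _)); apply: cvgB; first exact: cvg_cst.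
  apply: cvgM; last exact: cvg_dotv.
  exact: (continuous_cvg _ (@exprn_continuous R 2 _) lam_cvg).
have c_cvg : (fun z' => rcos z'.1) @ G --> rcos z.1.
  exact: (continuous_cvg _ (rcos_continuous _) t_cvg).
have s_cvg : (fun z' => rsin z'.1) @ G --> rsin z.1.
  exact: (continuous_cvg _ (rsin_continuous _) t_cvg).
apply: (@cvg_pair _ _ _ G (nbhs (fibre_homotopy z).1) (nbhs (fibre_homotopy z).2)
  _ _ _ (fun z' => (fibre_homotopy z').1) (fun z' => (fibre_homotopy z').2)).
all: apply: cvg_row_mx.
- exact: cvgZ al_cvg (cvg_cst _).
- exact: cvgZ lam_cvg X_cvg.
- apply: cvgD E_cvg; apply: cvgZ (cvg_cst _); apply: cvgN.
  by apply: cvgM; [apply: cvgM | apply: cvg_dotv].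
- by apply: cvgD; apply: cvgZ => //; [apply: cvgN; exact: cvg_jplus | apply: cvgM].
Qed.

End fibre_homotopy.

Theorem lemmaA2 (R : realType) (n : nat) (hn : (2 <= n)%N)
  (a : 'rV[R]_(2 * n)) (ha : sqnorm a = 1)
  (eps : 'rV[R]_(2 * n) -> 'rV[R]_(2 * n))
  (heps_cont : {within sphere R (2 * n), continuous eps})
  (heps_maps : forall u, sphere R (2 * n) u -> perp_sphere a (eps u))
  (u0 : 'rV[R]_(2 * n)) (hu0 : sphere R (2 * n) u0) :
  based_homotopic R
    (Sigma2 (sphere R (2 * n)))             (* S^{2n+1} = Sigma^2 S^{2n-1} *)
    (Qt R (2 * n + 2))                      (* \widetilde Q_{n+1} *)
    (u0, 0)                                 (* base point *)
    (fun y => iotaQ (Sigma2f (fun u => fib_incl a (eps u)) y))   (* iota_* Sigma^2 (f_n o eps_n) *)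
    (fun y => fib_incl (vsum (a, 0)) (vsum (Sigma2f eps y))).
                                            (* f_{n+1} o eps_{n+1} *)
Proof.
exists (fibre_homotopy a eps); split.
  exact: fibre_homotopy_continuous.
split; first by move=> t y; rewrite /= in_itv /=; exact: fibre_homotopy_Qt.
split; first by move=> y _; exact: fibre_homotopy0.
split; first by move=> y _; exact: fibre_homotopy1.
by move=> t _; rewrite fibre_homotopy_axis fibre_homotopy0.
Qed.
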